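(* Let $A$ be a non-empty set, $1\le p<\infty$, and let $P\colon\ell_p(A)\to\ell_p(A)$ be a contractive positive projection with constant diagonal $\alpha>0$. Then $n=1/\alpha\in\mathbb{N}$, and there exists a partition $\{A_i\}_i$ of $A$ into sets of size $n$ such that \[P\Big(\sum_{a\in A}\lambda_a e_a\Big)=\alpha\sum_i\Big(\sum_{a\in A_i}\lambda_a\Big)\chi_{A_i}\] whenever $\sum_{a\in A}|\lambda_a|^p<\infty$. In particular, if $A$ is countable, there is an enumeration of $A$ such that the matrix of $P$ is block diagonal with every diagonal block equal to $\alpha\mathbf{1}_n$ and all off-diagonal blocks equal to $\mathbf{0}_n$.
   Context: $\chi_B$ denotes the characteristic function of $B\subseteq A$ and $e_a=\chi_{\{a\}}$. $\mathbf{0}_n$ is the $n\times n$ zero block and $\mathbf{1}_n$ the $n\times n$ block of ones. Contractive means $\|P\|\le 1$; positive projection means linear, $P^2=P$, $P\ge0$. For a Dedekind complete vector lattice $X$, $\mathcal{L}^r(X)$ is the Dedekind complete vector lattice of regular operators; the center (operators $T$ with $\pm T\le\lambda\,\mathrm{id}_X$ for some $\lambda$) is a projection band in it, with band projection $\mathcal{D}$; $T$ has constant diagonal $\alpha$ if $\mathcal{D}(T)=\alpha\,\mathrm{id}_X$. For $X=\ell_p(A)$ this means $(Pe_a)(a)=\alpha$ for all $a\in A$. *)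

From HB Require Import structures.
From mathcomp Require Import all_boot all_order all_algebra.
From mathcomp Require Import all_classical all_reals all_analysis.
Set Implicit Arguments. Unset Strict Implicit. Unset Printing Implicit Defensive.
Import Order.TTheory GRing.Theory Num.Theory.
Local Open Scope classical_set_scope.
Local Open Scope ring_scope.

Section Lp.
Variables (R : realType) (A : choiceType) (p : R).

Definition in_lp (f : A -> R) : Prop :=
  (\esum_(a in [set: A]) ((`|f a| `^ p)%:E) < +oo)%E.

Definition lp_norm (f : A -> R) : R :=
  (fine (\esum_(a in [set: A]) ((`|f a| `^ p)%:E))) `^ p^-1.

Definition unit_vec (a : A) : A -> R := fun b => if b == a then 1 else 0.

(* P : l_p(A) -> l_p(A), represented as a map on functions, constrained on l_p *)
Definition lp_linear (P : (A -> R) -> (A -> R)) : Prop :=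
  (forall f, in_lp f -> in_lp (P f)) /\
  (forall f g, in_lp f -> in_lp g -> P (f \+ g) = P f \+ P g) /\
  (forall (c : R) f, in_lp f -> P (fun a => c * f a) = (fun a => c * P f a)).

Definition lp_positive_projection (P : (A -> R) -> (A -> R)) : Prop :=
  lp_linear P /\
  (forall f, in_lp f -> P (P f) = P f) /\
  (forall f, in_lp f -> (forall a, 0 <= f a) -> forall a, 0 <= P f a).

Definition lp_contractive (P : (A -> R) -> (A -> R)) : Prop :=
  forall f, in_lp f -> lp_norm (P f) <= lp_norm f.

Definition const_diag (P : (A -> R) -> (A -> R)) (alpha : R) : Prop :=
  forall a, P (unit_vec a) a = alpha.

End Lp.

(* Write m x y = (P e_y) x for the matrix of P.  For a fixed point f of P,
   positivity gives |f| <= P|f| pointwise, and a strict inequality at one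
   point would make P|f| longer than |f|; so |f| is fixed too, whence
   |f x| m y x <= |f y|.  Applied to the fixed points P e_a - mu P e_b this
   shows that "m x a > 0" is an equivalence relation whose classes (blocks)
   carry proportional columns with m a b m b a = alpha^2.  Evaluating
   P (P e_a) = P e_a at a gives #block * alpha^2 = alpha, so blocks have
   exactly 1/alpha elements.  Take the column b of a block whose entry m b a
   is smallest; its entries are >= alpha, and contractivity at
   P e_b + s e_b, differentiated at s = 0, bounds the sum of their p-th
   powers by alpha^(p-1) = #block * alpha^p, so they all equal alpha.  The
   formula for P f then follows by approximating f by its restrictions to
   finite sets. *)

From HB Require Import structures.
From mathcomp Require Import all_boot all_order all_algebra.
From mathcomp Require Import all_classical all_reals all_analysis.
From mathcomp Require Import finmap ring lra.

Set Implicit Arguments. Unset Strict Implicit. Unset Printing Implicit Defensive.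
Import Order.TTheory GRing.Theory Num.Theory numFieldNormedType.Exports.
Local Open Scope classical_set_scope.
Local Open Scope ring_scope.

Section real_powR.
Variable R : realType.
Implicit Types p x y : R.

Lemma bernoulli_powR p x : 1 <= p -> 0 <= x -> 1 + p * (x - 1) <= x `^ p.
Proof.
move=> p1 x0; have [->|pn1] := eqVneq p 1; first by rewrite powRr1 // mul1r addrC subrK.
have p_gt1 : 1 < p by rewrite lt_neqAle eq_sym pn1.
have p0 : 0 < p by lra.
have q0 : 0 < p / (p - 1) by rewrite divr_gt0 //; lra.
have pq : p^-1 + (p / (p - 1))^-1 = 1 by rewrite invf_div; field; lra.
(* Young's inequality with second factor 1 *)
have := conjugate_powR x0 ler01 p0 q0 pq.
rewrite powR1 mulr1 mul1r invf_div -(ler_pM2l p0) => young.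
have -> : x `^ p = p * (x `^ p / p + (p - 1) / p) - p + 1 by field; rewrite gt_eqF.
lra.
Qed.

Lemma powR_tangent_le p x y : 1 <= p -> 0 <= x -> 0 < y ->
  y `^ p + p * y `^ (p - 1) * (x - y) <= x `^ p.
Proof.
move=> p1 x0 y0.
have xy0 : 0 <= x / y by rewrite divr_ge0 // ltW.
have := bernoulli_powR p1 xy0.
rewrite -(ler_pM2l (powR_gt0 p y0)) -powRM ?(ltW y0) // mulrCA divff ?gt_eqF // mulr1.
apply: le_trans; rewrite -(mulr_powRB1 (ltW y0) (lt_le_trans ltr01 p1)).
by rewrite le_eqVlt; apply/orP; left; apply/eqP; field; rewrite gt_eqF.
Qed.

Lemma powR_le_right_limit (V a r : R) : 0 < a ->
  (forall s, 0 < s -> V <= (a + s) `^ r) -> V <= a `^ r.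
Proof.
move=> a0 hV; rewrite leNgt; apply/negP => aV.
have cont : {for a, continuous (@powR R ^~ r)}.
  apply: differentiable_continuous; apply/derivable1_diffP.
  by apply: derivable_powR; rewrite in_itv /= a0.
have /nbhs_normP [e /= e0 he] : \forall x \near a, x `^ r < V.
  exact: cvgr_lt cont V aV.
have e20 : 0 < e / 2 by rewrite divr_gt0.
have : (a + e / 2) `^ r < V.
  by apply: he; rewrite /ball_ /= opprD addrA subrr add0r normrN gtr0_norm //; lra.
by rewrite ltNge hV.
Qed.

(* The tangent-line bounds reduce the hypothesis to V <= (a + s) `^ (p - 1)
   for every s > 0. *)
Lemma powR_first_order_le (p a V : R) : 1 <= p -> 0 < a -> 0 <= V ->
  (forall s, 0 < s -> (1 + s) `^ p * V <= V - a `^ p + (a + s) `^ p) ->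
  V <= a `^ (p - 1).
Proof.
move=> p1 a0 V0 hV; apply: powR_le_right_limit => // s s0.
have ps0 : 0 < p * s by rewrite mulr_gt0 //; lra.
have lower := powR_tangent_le (x := 1 + s) p1 (addr_ge0 ler01 (ltW s0)) ltr01.
have upper := powR_tangent_le p1 (ltW a0) (addr_gt0 a0 s0).
rewrite !powR1 mulr1 addrAC subrr add0r in lower.
have : (p * s) * V <= (p * s) * (a + s) `^ (p - 1).
  have := hV s s0; have := ler_wpM2r V0 lower.
  move: upper; rewrite opprD addrA subrr add0r; nra.
by rewrite ler_pM2l.
Qed.
End real_powR.

Section esum_lemmas.
Variables (R : realType) (T : choiceType).

Lemma esumZl_le (k : R) (u : T -> R) : 0 <= k -> (forall x, 0 <= u x) ->
  (\esum_(x in [set: T]) (k * u x)%:E <= k%:E * \esum_(x in [set: T]) (u x)%:E)%E.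
Proof.
move=> k0 u0; apply: ge_ereal_sup => _ [X [fX _] <-].
rewrite fsbig_finite //= sumEFin -mulr_sumr EFinM.
apply: lee_wpmul2l; first by rewrite lee_fin.
by apply: ereal_sup_ubound; exists X => //; rewrite fsbig_finite //= sumEFin.
Qed.

Lemma esum_setT_split (u : T -> \bar R) (S : set T) : finite_set S ->
  (forall x, (0 <= u x)%E) ->
  \esum_(x in [set: T]) u x =
  (\sum_(x \in S) u x + \esum_(x in [set: T]) (if x \in S then 0 else u x))%E.
Proof.
move=> fS u0; rewrite (esumID S) ?setTI; last by move=> x _; exact: u0.
rewrite esum_fset //; congr (_ + _)%E.
by rewrite esum_mkcond; apply: eq_esum => x _; rewrite in_setC; case: (x \in S).
Qed.

Lemma esum_finsupp (u : T -> \bar R) (S : set T) : finite_set S ->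
  (forall x, (0 <= u x)%E) -> (forall x, ~ S x -> u x = 0%E) ->
  \esum_(x in [set: T]) u x = (\sum_(x \in S) u x)%E.
Proof.
move=> fS u0 uS; rewrite (esum_setT_split fS) // esum1 ?adde0 // => x _.
by case: ifPn => // /negP xS; apply: uS => Sx; apply: xS; exact: mem_set.
Qed.

End esum_lemmas.

Section lp_space.
Variables (R : realType) (A : choiceType) (p : R).
Hypothesis p_ge1 : 1 <= p.
Implicit Types (f g : A -> R) (a : A).

Let p_gt0 : 0 < p. Proof. exact: lt_le_trans ltr01 p_ge1. Qed.

Definition lp_sum f : \bar R := (\esum_(a in [set: A]) (`|f a| `^ p)%:E)%E.

Lemma lp_sum_ge0 f : (0 <= lp_sum f)%E.
Proof. by apply: esum_ge0 => x _; rewrite lee_fin powR_ge0. Qed.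

Lemma lp_sum_fin f : in_lp p f -> lp_sum f = (fine (lp_sum f))%:E.
Proof. by move=> hf; rewrite fineK // ge0_fin_numE // lp_sum_ge0. Qed.

Lemma lp_sum_finsupp f (S : set A) : finite_set S -> (forall x, ~ S x -> f x = 0) ->
  lp_sum f = (\sum_(x <- fset_set S) `|f x| `^ p)%:E.
Proof.
move=> fS fS0; rewrite /lp_sum (@esum_finsupp _ _ _ S) //.
- by rewrite fsbig_finite //= sumEFin.
- by move=> x /fS0 ->; rewrite normr0 powR0 // gt_eqF.
Qed.

Lemma in_lp_finsupp f (S : set A) : finite_set S -> (forall x, ~ S x -> f x = 0) ->
  in_lp p f.
Proof. by move=> fS fS0; rewrite /in_lp -/(lp_sum f) (lp_sum_finsupp fS fS0) ltry. Qed.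

Lemma in_lp0 : in_lp p (fun _ : A => 0 : R).
Proof. by apply: (in_lp_finsupp (S := set0)) => //; exact: finite_set0. Qed.

Lemma le_lp_sum f g : (forall x, `|g x| <= `|f x|) -> (lp_sum g <= lp_sum f)%E.
Proof.
move=> gf; apply: le_esum => x _; rewrite lee_fin.
by apply: ge0_ler_powR (gf x); rewrite ?nnegrE // ltW.
Qed.

Lemma in_lp_le f g : (forall x, `|g x| <= `|f x|) -> in_lp p f -> in_lp p g.
Proof. by move=> gf; apply: le_lt_trans (le_lp_sum gf). Qed.

Lemma in_lp_scale (c : R) f : in_lp p f -> in_lp p (fun x => c * f x).
Proof.
move=> hf; rewrite /in_lp.
under eq_esum do rewrite normrM powRM //.
apply: le_lt_trans (esumZl_le (powR_ge0 _ _) (fun x => powR_ge0 _ _)) _.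
by apply: lte_mul_pinfty => //; rewrite lee_fin powR_ge0.
Qed.

Lemma in_lp_add f g : in_lp p f -> in_lp p g -> in_lp p (f \+ g).
Proof.
move=> hf hg.
have sum_le x : `|(f \+ g) x| `^ p <= 2 `^ p * (`|f x| `^ p + `|g x| `^ p).
  have m0 : 0 <= Num.max `|f x| `|g x| by rewrite le_max normr_ge0.
  apply: (@le_trans _ _ ((2 * Num.max `|f x| `|g x|) `^ p)).
    apply: ge0_ler_powR; rewrite ?nnegrE ?mulr_ge0 ?(ltW p_gt0) //.
    apply: le_trans (ler_normD _ _) _.
    by rewrite mulr2n mulrDl mul1r lerD // le_max lexx ?orbT.
  rewrite powRM // ler_wpM2l ?powR_ge0 //.
  by case: (leP `|f x| `|g x|) => _; rewrite ?lerDr ?lerDl powR_ge0.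
pose bound x := 2 `^ p * (`|f x| `^ p + `|g x| `^ p).
have : (lp_sum (f \+ g)%R <= \esum_(x in [set: A]) (bound x)%:E)%E.
  by apply: le_esum => x _; rewrite lee_fin.
move/le_lt_trans; apply.
apply: le_lt_trans (esumZl_le (powR_ge0 _ _) _) _.
  by move=> x; rewrite addr_ge0 // powR_ge0.
apply: lte_mul_pinfty => //; under eq_esum do rewrite EFinD.
by rewrite esumD ?lte_add_pinfty // => x _; rewrite lee_fin powR_ge0.
Qed.

Lemma unit_vecE a x : unit_vec R a x = (x == a)%:R.
Proof. by rewrite /unit_vec; case: eqP. Qed.

Lemma in_lp_unit_vec a : in_lp p (unit_vec R a).
Proof.
apply: (@in_lp_finsupp _ [set a]); first exact: finite_set1.
by move=> x; rewrite unit_vecE; case: eqP.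
Qed.

Lemma in_lp_sum_unit_vec (s : seq A) (l : A -> R) :
  in_lp p (fun x => \sum_(b <- s) l b * unit_vec R b x).
Proof.
elim: s => [|b s hs]; first by under eq_fun do rewrite big_nil; exact: in_lp0.
under eq_fun do rewrite big_cons.
exact: in_lp_add (in_lp_scale _ (in_lp_unit_vec b)) hs.
Qed.

Lemma restrict_sum_unit_vec f (S : set A) : finite_set S ->
  f \_ S = fun x => \sum_(b <- fset_set S) f b * unit_vec R b x.
Proof.
move=> fS; apply/funext => x; rewrite /patch -(in_fset_set fS).
case: ifPn => xS.
  rewrite (bigD1_seq x) ?fset_uniq //= unit_vecE eqxx mulr1 big1 ?addr0 //.
  by move=> b bx; rewrite unit_vecE eq_sym (negPf bx) mulr0.
rewrite big1_seq // => b /andP[_ bS]; rewrite unit_vecE.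
by case: eqP => [xb|_]; [rewrite xb bS in xS | rewrite mulr0].
Qed.

Lemma in_lp_restrict f (S : set A) : finite_set S -> in_lp p (f \_ S).
Proof.
move=> fS; apply: (in_lp_finsupp fS) => x Sx.
by rewrite /patch ifF //; apply/negP => /set_mem.
Qed.

Lemma in_lp_abs f : in_lp p f -> in_lp p (fun x => `|f x|).
Proof. by apply: in_lp_le => x; rewrite normr_id. Qed.

Lemma in_lp_opp f : in_lp p f -> in_lp p (fun x => - f x).
Proof. by apply: in_lp_le => x; rewrite normrN. Qed.

Lemma in_lp_sub f g : in_lp p f -> in_lp p g -> in_lp p (fun x => f x - g x).
Proof. by move=> hf /in_lp_opp; exact: in_lp_add. Qed.

Lemma lp_sum_ge_coord f x : ((`|f x| `^ p)%:E <= lp_sum f)%E.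
Proof.
apply: esum_ge; exists [set x]; first by split => //; exact: finite_set1.
by rewrite fsbig_set1.
Qed.

Lemma lt_lp_sum f g y : in_lp p f -> (forall x, `|f x| <= `|g x|) -> `|f y| < `|g y| ->
  (lp_sum f < lp_sum g)%E.
Proof.
move=> hf fg fgy.
have u0 (h : A -> R) x : (0 <= (`|h x| `^ p)%:E)%E by rewrite lee_fin powR_ge0.
rewrite /lp_sum (esum_setT_split (finite_set1 y) (u0 f)).
rewrite (esum_setT_split (finite_set1 y) (u0 g)) !fsbig_set1.
have rest_le : (\esum_(x in [set: A]) (if x \in [set y] then 0 else (`|f x| `^ p)%:E) <=
                lp_sum f)%E.
  by apply: le_esum => x _; case: ifP.
apply: lte_leD.
- rewrite ge0_fin_numE; first exact: le_lt_trans rest_le hf.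
  by apply: esum_ge0 => x _; case: ifP.
- by rewrite lte_fin gt0_ltr_powR ?nnegrE.
- apply: le_esum => x _; case: ifP => // _; rewrite lee_fin.
  by apply: ge0_ler_powR (fg x); rewrite ?nnegrE // ltW.
Qed.

Lemma lp_sum_tail_lt f e : in_lp p f -> 0 < e ->
  exists2 X : set A, finite_set X & forall S, finite_set S -> X `<=` S ->
    (lp_sum (fun x => f x - (f \_ S) x)%R < e%:E)%E.
Proof.
move=> hf e0; have hN := lp_sum_fin hf; set v := fine (lp_sum f) in hN.
have [X fX hX] : exists2 X, finite_set X &
    ((v - e)%:E < \sum_(x \in X) (`|f x| `^ p)%:E)%E.
  have : ((v - e)%:E < lp_sum f)%E by rewrite hN lte_fin gtrBl.
  by rewrite /lp_sum /esum => /ereal_sup_gt [_ [X [fX _] <-]] ?; exists X.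
exists X => // S fS XS.
have u0 x : (0 <= (`|f x| `^ p)%:E)%E by rewrite lee_fin powR_ge0.
have split_S : lp_sum f =
    (\sum_(x \in S) (`|f x| `^ p)%:E + lp_sum (fun x => f x - (f \_ S) x)%R)%E.
  rewrite {1}/lp_sum (esum_setT_split fS) //; congr (_ + _)%E.
  apply: eq_esum => x _; rewrite /patch; case: ifP => _; last by rewrite subr0.
  by rewrite subrr normr0 powR0 // gt_eqF.
have XS_le : (\sum_(x \in X) (`|f x| `^ p)%:E <= \sum_(x \in S) (`|f x| `^ p)%:E)%E.
  by apply: lee_fsum_nneg_subset => // x /set_mem Xx; apply/mem_set/XS.
have hh : in_lp p (fun x => f x - (f \_ S) x) := in_lp_sub hf (in_lp_restrict f fS).
move: split_S hX XS_le; rewrite hN (lp_sum_fin hh) !fsumEFin // -EFinD => vE.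
by have := EFin_inj vE; rewrite !lte_fin !lee_fin; lra.
Qed.

Section linear_operator.
Variable P : (A -> R) -> (A -> R).
Hypothesis P_linear : lp_linear p P.

Lemma in_lp_P f : in_lp p f -> in_lp p (P f).
Proof. by case: P_linear => h _; apply: h. Qed.

Lemma P_add f g : in_lp p f -> in_lp p g -> P (f \+ g) = P f \+ P g.
Proof. by case: P_linear => _ [h _]; apply: h. Qed.

Lemma P_scale (c : R) f : in_lp p f -> P (fun x => c * f x) = (fun x => c * P f x).
Proof. by case: P_linear => _ [_ h]; apply: h. Qed.

Lemma P_opp f : in_lp p f -> P (fun x => - f x) = (fun x => - P f x).
Proof.
move=> hf; have := P_scale (-1) hf.
by under eq_fun do rewrite mulN1r; under [RHS]eq_fun do rewrite mulN1r.
Qed.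

Lemma P_sub f g : in_lp p f -> in_lp p g ->
  P (fun x => f x - g x) = (fun x => P f x - P g x).
Proof.
move=> hf hg.
by rewrite -/(f \+ (fun x => - g x)) (P_add hf (in_lp_opp hg)) P_opp.
Qed.

Lemma P_sum_unit_vec (s : seq A) (l : A -> R) :
  P (fun x => \sum_(b <- s) l b * unit_vec R b x) =
  (fun x => \sum_(b <- s) l b * P (unit_vec R b) x).
Proof.
elim: s => [|b s IH].
  have := P_scale 0 in_lp0; under eq_fun do rewrite mul0r; move=> P0.
  by under eq_fun do rewrite big_nil; rewrite P0; apply/funext => x; rewrite big_nil mul0r.
have hb : in_lp p (fun x => l b * unit_vec R b x) := in_lp_scale _ (in_lp_unit_vec b).
under eq_fun do rewrite big_cons.
rewrite -/((fun x => l b * unit_vec R b x) \+ _) (P_add hb (in_lp_sum_unit_vec s l)) IH.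
by rewrite (P_scale _ (in_lp_unit_vec b)); apply/funext => x; rewrite big_cons.
Qed.

Lemma P_restrict f (S : set A) x : finite_set S ->
  P (f \_ S) x = \sum_(b <- fset_set S) f b * P (unit_vec R b) x.
Proof. by move=> fS; rewrite restrict_sum_unit_vec // P_sum_unit_vec. Qed.

Hypothesis P_ge0 : forall f, in_lp p f -> (forall x, 0 <= f x) -> forall x, 0 <= P f x.

Lemma P_le f g : in_lp p f -> in_lp p g -> (forall x, f x <= g x) ->
  forall x, P f x <= P g x.
Proof.
move=> hf hg fg x; rewrite -subr_ge0.
have /(congr1 (fun h => h x)) /= <- := P_sub hg hf.
by apply: P_ge0 (in_lp_sub hg hf) _ x => y; rewrite subr_ge0.
Qed.

Section contractive_projection.
Variable alpha : R.
Hypotheses (P_idem : forall f, in_lp p f -> P (P f) = P f)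
  (P_contr : lp_contractive p P) (P_diag : const_diag P alpha) (alpha_gt0 : 0 < alpha).

Local Notation m x y := (P (unit_vec R y) x).

Lemma lp_sum_P_le f : in_lp p f -> (lp_sum (P f) <= lp_sum f)%E.
Proof.
move=> hf; rewrite (lp_sum_fin hf) (lp_sum_fin (in_lp_P hf)) lee_fin.
rewrite leNgt; apply/negP => lt; have := P_contr hf; apply/negP; rewrite -ltNge.
by apply: gt0_ltr_powR lt; rewrite ?invr_gt0 ?nnegrE ?fine_ge0 ?lp_sum_ge0.
Qed.

Lemma P_abs_fixed f : in_lp p f -> P f = f ->
  P (fun x => `|f x|) = (fun x => `|f x|).
Proof.
move=> hf Pf; set g := fun x => `|f x|; have hg : in_lp p g := in_lp_abs hf.
have g_le x : g x <= P g x.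
  rewrite /g ler_norml; apply/andP; split.
  - have := P_le (in_lp_opp hf) hg (fun y => _ : - f y <= g y) x.
    by rewrite P_opp // Pf lerNl; apply; move=> y; rewrite /g -normrN ler_norm.
  - by rewrite -{1}Pf; apply: P_le hf hg _ x => y; exact: ler_norm.
apply/funext => y; apply/eqP; rewrite eq_le g_le andbT leNgt; apply/negP => lt.
have := lp_sum_P_le hg; rewrite leNgt => /negP; apply.
apply: (lt_lp_sum (y := y) hg) => [x|]; rewrite /g normr_id.
  by apply: le_trans (g_le x) (ler_norm _).
by rewrite (gtr0_norm (le_lt_trans (normr_ge0 _) lt)).
Qed.

Lemma fixed_abs_mul_le f x y : in_lp p f -> P f = f -> `|f x| * m y x <= `|f y|.
Proof.
move=> hf Pf; have hx := in_lp_scale `|f x| (in_lp_unit_vec x).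
have := P_le hx (in_lp_abs hf) _ y; rewrite P_scale ?P_abs_fixed //; last exact: in_lp_unit_vec.
by apply=> z; rewrite unit_vecE; case: eqP => [->|_]; rewrite ?mulr1 ?mulr0.
Qed.

Lemma in_lp_col b : in_lp p (P (unit_vec R b)).
Proof. exact/in_lp_P/in_lp_unit_vec. Qed.

Lemma m_ge0 x y : 0 <= m x y.
Proof. by apply: P_ge0 (in_lp_unit_vec y) _ x => z; rewrite unit_vecE. Qed.

Lemma m_gt0 x y : (0 < m x y) = (m x y != 0).
Proof. by rewrite lt_neqAle m_ge0 andbT eq_sym. Qed.

Lemma m_trans x y z : 0 < m y x -> 0 < m z y -> 0 < m z x.
Proof.
move=> yx zy; apply: lt_le_trans (mulr_gt0 yx zy) _.
have := fixed_abs_mul_le y z (in_lp_col x) (P_idem (in_lp_unit_vec x)).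
by rewrite !ger0_norm ?m_ge0.
Qed.

Lemma in_lp_col_sub a b (mu : R) : in_lp p (fun z => m z a - mu * m z b).
Proof. exact: in_lp_sub (in_lp_col a) (in_lp_scale mu (in_lp_col b)). Qed.

Lemma P_col_sub a b (mu : R) :
  P (fun z => m z a - mu * m z b) = (fun z => m z a - mu * m z b).
Proof.
rewrite P_sub ?P_scale; last exact: in_lp_scale (in_lp_col b).
- by rewrite !P_idem //; exact: in_lp_unit_vec.
- exact: in_lp_col.
- exact: in_lp_col.
Qed.

Lemma m_sym x a : 0 < m x a -> 0 < m a x.
Proof.
move=> xa; rewrite m_gt0; apply/negP => /eqP ax.
have := fixed_abs_mul_le a x (in_lp_col_sub a x (m x a / alpha)) (P_col_sub _ _ _).
rewrite !P_diag ax mulr0 subr0 divfK ?gt_eqF // subrr normr0 gtr0_norm //.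
by rewrite leNgt mulr_gt0.
Qed.

Lemma col_proportional a b : 0 < m b a -> forall z, m z a = m b a / alpha * m z b.
Proof.
move=> ba z; apply/eqP; rewrite -subr_eq0; apply: contraT => gz.
have gb : m b a - m b a / alpha * m b b = 0 by rewrite P_diag divfK ?gt_eqF ?subrr.
have bz : 0 < m b z.
  have [za|] := boolP (0 < m z a); first exact: m_trans (m_sym za) ba.
  rewrite m_gt0 negbK => /eqP za; apply: m_sym; rewrite m_gt0.
  by apply: contraNneq gz => ->; rewrite za mulr0 subr0.
have := fixed_abs_mul_le z b (in_lp_col_sub a b (m b a / alpha)) (P_col_sub _ _ _).
by rewrite gb normr0 leNgt pmulr_lgt0 // normr_gt0 gz.
Qed.

Lemma m_mul_sym a b : 0 < m b a -> m a b * m b a = alpha ^+ 2.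
Proof.
move=> ba; have := col_proportional ba a; rewrite P_diag => e.
by rewrite expr2 {1}e; field; rewrite gt_eqF.
Qed.

Definition block a : set A := [set x | 0 < m x a].

Lemma block_refl a : block a a.
Proof. by rewrite /block /= P_diag. Qed.

Lemma block_sym a x : block a x -> block x a.
Proof. exact: m_sym. Qed.

Lemma P_restrict_col a (S : set A) : finite_set S -> S `<=` block a ->
  P ((P (unit_vec R a)) \_ S) a = #|` fset_set S|%:R * alpha ^+ 2.
Proof.
move=> fS Sa; rewrite P_restrict // big_seq.
under eq_bigr => b /[!in_fset_set fS] /set_mem/Sa ba do rewrite mulrC (m_mul_sym ba).
by rewrite -big_seq big_const_seq count_predT iter_addr_0 mulr_natl.
Qed.

Lemma block_finite a : finite_set (block a).
Proof.
apply: contrapT => /(infinite_set_fset (Num.trunc alpha^-1).+1) [B Ba Bn].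
have := P_le (in_lp_restrict (P (unit_vec R a)) (finite_fset B)) (in_lp_col a) _ a.
rewrite P_restrict_col ?finite_fset // set_fsetK P_idem ?P_diag; last exact: in_lp_unit_vec.
have le_col z : (P (unit_vec R a) \_ [set` B]) z <= m z a.
  by rewrite /patch; case: ifP => // _; exact: m_ge0.
move=> /(_ le_col); rewrite leNgt => /negP; apply.
rewrite expr2 mulrA ltr_pMl // -ltr_pdivrMr // div1r.
by apply: lt_le_trans (truncnS_gt _) _; rewrite ler_nat.
Qed.

Lemma m_eq0_notin_block a x : ~ block a x -> m x a = 0.
Proof. by move=> /negP; rewrite /block /= m_gt0 negbK => /eqP. Qed.

Lemma card_block a : #|` fset_set (block a)|%:R * alpha = 1.
Proof.
have col_eq : P (unit_vec R a) = P (unit_vec R a) \_ (block a).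
  apply/funext => z; rewrite /patch; case: ifPn => // /negP zB.
  by apply: m_eq0_notin_block => /mem_set.
have := congr1 (fun h => h a) (P_idem (in_lp_unit_vec a)); rewrite /=.
rewrite {1}col_eq (P_restrict_col (block_finite a) (@subset_refl _ _)) P_diag.
rewrite expr2 mulrA => e.
by apply: (mulIf (lt0r_neq0 alpha_gt0)); rewrite mul1r.
Qed.

Lemma col_power_sum_le b (S : set A) : finite_set S -> (forall z, ~ S z -> m z b = 0) ->
  \sum_(z <- fset_set S) m z b `^ p <= alpha `^ (p - 1).
Proof.
move=> fS Sb; set V := \sum_(z <- fset_set S) m z b `^ p.
have Sbb : S b by apply: contrapT => /Sb; rewrite P_diag; exact/eqP/lt0r_neq0.
have bS : b \in fset_set S by rewrite in_fset_set //; exact: mem_set.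
apply: powR_first_order_le => //; first by rewrite sumr_ge0 // => z _; exact: powR_ge0.
move=> s s0; pose g z := m z b + s * unit_vec R b z.
have hs : in_lp p (fun z => s * unit_vec R b z) := in_lp_scale s (in_lp_unit_vec b).
have hg : in_lp p g := in_lp_add (in_lp_col b) hs.
have Pg : P g = fun z => (1 + s) * m z b.
  rewrite /g -/(P (unit_vec R b) \+ _) (P_add (in_lp_col b) hs).
  rewrite (P_scale s (in_lp_unit_vec b)) (P_idem (in_lp_unit_vec b)).
  by apply/funext => z /=; rewrite mulrDl mul1r.
have g_out z : ~ S z -> g z = 0.
  move=> zS; rewrite /g Sb // unit_vecE; case: eqP => [zb|_]; last by rewrite mulr0 addr0.
  by rewrite zb in zS.
have := lp_sum_P_le hg; rewrite Pg (lp_sum_finsupp fS g_out) (lp_sum_finsupp fS); last first.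
  by move=> z /Sb ->; rewrite mulr0.
rewrite lee_fin.
have -> : \sum_(z <- fset_set S) `|(1 + s) * m z b| `^ p = (1 + s) `^ p * V.
  rewrite /V mulr_sumr; apply: eq_bigr => z _.
  by rewrite ger0_norm ?powRM ?mulr_ge0 ?m_ge0 // addr_ge0 // ltW.
rewrite /V !(bigD1_seq b) ?fset_uniq //=.
have -> : \sum_(z <- fset_set S | z != b) `|g z| `^ p =
          \sum_(z <- fset_set S | z != b) m z b `^ p.
  by apply: eq_bigr => z zb; rewrite /g unit_vecE (negPf zb) mulr0 addr0 ger0_norm ?m_ge0.
rewrite /g unit_vecE eqxx mulr1 P_diag.
by rewrite ger0_norm ?addr_ge0 ?(ltW s0) ?(ltW alpha_gt0) //; lra.
Qed.

Lemma col_eq_of_ge b (S : set A) : finite_set S -> (forall z, ~ S z -> m z b = 0) ->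
  #|` fset_set S|%:R * alpha = 1 -> (forall z, S z -> alpha <= m z b) ->
  forall z, S z -> m z b = alpha.
Proof.
move=> fS Sb nS ge z Sz.
have pow_ge x : S x -> alpha `^ p <= m x b `^ p.
  by move=> Sx; apply: ge0_ler_powR (ge x Sx); rewrite ?nnegrE ?m_ge0 // ltW.
have sum_eq : alpha `^ (p - 1) = \sum_(x <- fset_set S) alpha `^ p.
  rewrite big_const_seq count_predT iter_addr_0 -mulr_natl.
  by rewrite -(mulr_powRB1 (ltW alpha_gt0) p_gt0) mulrA nS mul1r.
have : \sum_(x <- fset_set S) (m x b `^ p - alpha `^ p) == 0.
  rewrite sumrB -sum_eq subr_eq0 eq_le col_power_sum_le //= sum_eq big_seq.
  rewrite [leRHS]big_seq; apply: ler_sum => x.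
  by rewrite in_fset_set // => /set_mem; exact: pow_ge.
have zS : z \in fset_set S by rewrite in_fset_set //; exact: mem_set.
rewrite big_seq psumr_eq0 => [/allP/(_ z zS)|x]; last first.
  by rewrite in_fset_set // subr_ge0 => /set_mem; exact: pow_ge.
rewrite zS subr_eq0 => /eqP /powR_injective; apply; rewrite ?nnegrE ?m_ge0 //.
exact: ltW.
Qed.

Lemma block_argmin a : exists2 b, block a b & forall z, block a z -> m b a <= m z a.
Proof.
have inS (x : A) : (x \in fset_set (block a)) = (x \in block a).
  exact: in_fset_set (block_finite a) x.
have aS : a \in fset_set (block a) by rewrite inS; exact/mem_set/block_refl.
case: (@arg_minP _ _ _ [` aS]%fset xpredT (fun i => m (val i) a) isT) => /= [[b bS]] _ hb.
exists b; first by have := bS; rewrite inS => /set_mem.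
move=> z za; have zS : z \in fset_set (block a) by rewrite inS; exact: mem_set.
exact: (hb [` zS]%fset).
Qed.

Lemma block_entry a x : block a x -> m x a = alpha.
Proof.
(* Normalizing by the column b with the smallest m b a makes every entry of
   column b at least alpha. *)
move=> xa; have [b ba bmin] := block_argmin a.
have ba0 : m b a != 0 := lt0r_neq0 ba.
have col_b z : m z b = alpha / m b a * m z a.
  rewrite (col_proportional (block_sym ba) z); congr (_ * _).
  by rewrite -[m a b](mulfK ba0) (m_mul_sym ba) expr2 mulrAC mulfK ?gt_eqF.
have out z : ~ block a z -> m z b = 0 by move=> /m_eq0_notin_block za; rewrite col_b za mulr0.
have ge z : block a z -> alpha <= m z b.
  move=> za; rewrite col_b mulrAC -mulrA ler_pMr // ler_pdivlMr // mul1r; exact: bmin.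
have cst := col_eq_of_ge (block_finite a) out (card_block a) ge.
have mba : m b a = alpha.
  apply: (mulfI (lt0r_neq0 alpha_gt0)).
  by rewrite -{1}(cst a (block_refl a)) (m_mul_sym ba) expr2.
by rewrite (col_proportional ba x) mba divff ?mul1r ?(cst x xa) // gt_eqF.
Qed.

Lemma row_entry a b : m a b = if b \in block a then alpha else 0.
Proof.
case: ifPn => [/set_mem/block_sym|/negP ba]; first exact: block_entry.
by apply: m_eq0_notin_block => /block_sym ab; apply: ba; exact: mem_set.
Qed.

Lemma block_eq a b z : block a z -> block b z -> block a = block b.
Proof.
move=> az bz; have ab : block b a := m_trans bz (block_sym az).
by apply/seteqP; split => y hy; [exact: m_trans ab hy | exact: m_trans (block_sym ab) hy].
Qed.

Lemma P_block_sum f a : in_lp p f -> P f a = alpha * \sum_(b \in block a) f b.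
Proof.
(* On a large finite set G, P_restrict computes P (f \_ G); the remaining tail
   has small norm, which P does not increase. *)
move=> hf; set L := alpha * _; apply/eqP; rewrite -subr_eq0; apply: contraT => d0.
have fB := block_finite a.
have e0 : 0 < `|P f a - L| `^ p by rewrite powR_gt0 // normr_gt0.
have [X fX tail] := lp_sum_tail_lt hf e0.
have fG : finite_set (X `|` block a) by rewrite finite_setU.
set G := X `|` block a in fG tail *.
set h := fun x => f x - (f \_ G) x.
have hh : in_lp p h := in_lp_sub hf (in_lp_restrict f fG).
have PG : P (f \_ G) a = L.
  rewrite P_restrict // /L -(fsbig_fwiden (fset_set G) (block a) (fun b => f b * m a b)).
  - rewrite !fsbig_finite //= mulr_sumr big_seq [RHS]big_seq.
    apply: eq_bigr => b; rewrite in_fset_set // => ba.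
    by rewrite row_entry ba mulrC.
  - by rewrite fset_setK // => b ab; right.
  - exact: fset_uniq.
  - by move=> b [_ ba] /=; rewrite row_entry ifN ?mulr0 //; apply/negP => /set_mem/ba.
have Ph : P h a = P f a - L.
  have ef : (f \_ G) \+ h = f by apply/funext => x /=; rewrite /h addrC subrK.
  have /(congr1 (fun g => g a)) /= := P_add (in_lp_restrict f fG) hh.
  by rewrite ef PG => ->; rewrite addrC addKr.
have := le_trans (lp_sum_ge_coord (P h) a) (lp_sum_P_le hh).
by move/le_lt_trans/(_ (tail G fG (@subsetUl _ X (block a)))); rewrite Ph ltxx.
Qed.

End contractive_projection.

End linear_operator.

End lp_space.

Theorem proposition3p2 (R : realType) (A : choiceType) (p : R)
  (P : (A -> R) -> (A -> R)) (alpha : R) :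
  [set: A] !=set0 -> 1 <= p ->
  lp_positive_projection p P -> lp_contractive p P ->
  const_diag P alpha -> 0 < alpha ->
  exists n : nat, [/\ (0 < n)%N, alpha = n%:R^-1 &
    exists Q : set (set A),
      [/\ (forall B, Q B -> (B #= `I_n)%card),
          (forall a, exists B, Q B /\ B a),
          (forall B C, Q B -> Q C -> B `&` C !=set0 -> B = C) &
          (forall f, in_lp p f -> forall B, Q B -> forall a, B a ->
             P f a = alpha * \sum_(b \in B) f b)]].
Proof.
move=> [a0 _] p_ge1 [P_lin [P_idem P_ge0]] P_contr P_diag alpha_gt0.
have card := card_block p_ge1 P_lin P_ge0 P_idem P_contr P_diag alpha_gt0.
have fin := block_finite p_ge1 P_lin P_ge0 P_idem P_contr P_diag alpha_gt0.
have same := block_eq p_ge1 P_lin P_ge0 P_idem P_contr P_diag alpha_gt0.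
have sum := P_block_sum p_ge1 P_lin P_ge0 P_idem P_contr P_diag alpha_gt0.
have refl := block_refl P_diag alpha_gt0.
set n := #|` fset_set (block P a0)|.
have nz : n%:R != 0 :> R.
  by apply: contra_eq_neq (card a0) => ->; rewrite mul0r eq_sym oner_neq0.
have card_n a : #|` fset_set (block P a)| = n.
  by apply/eqP; rewrite -(eqr_nat R) -(inj_eq (mulIf (lt0r_neq0 alpha_gt0))) /= !card.
exists n; split; first by rewrite lt0n -(pnatr_eq0 R).
  by apply: (mulfI nz); rewrite card divff.
exists [set B | exists a, B = block P a]; split.
- by move=> _ [a ->]; rewrite -(fset_setK (fin a)); apply/card_eq_fsetP; exact: card_n.
- by move=> a; exists (block P a); split; [exists a | exact: refl].
- by move=> _ _ [a ->] [b ->] [z [az bz]]; exact: same az bz.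
- by move=> f hf _ [c ->] a ca; rewrite (sum f a hf) (same a c a (refl a) ca).
Qed.
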